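(* Let $c\in\mathbb{R}\setminus\{0\}$ and let $\mathbf f_c:\mathbb{R}^2\to\mathbb{R}^2$ be $$\mathbf f_c(u,v)=\bigl(3v^2-3u^2-2cu,\ 6uv-2cv\bigr).$$ Let $\mathbf s=(s_1,s_2)$ be a point such that $\mathbf f_c(\mathbf x)=\mathbf s$ has exactly four distinct solutions $\mathbf x_i=(u_i,v_i)\in\mathbb{R}^2$, $i=1,\dots,4$, each with $\det(\mathrm{Jac}\,\mathbf f_c)(\mathbf x_i)\neq0$. Then, with $\mathfrak M_i=1/\det(\mathrm{Jac}\,\mathbf f_c)(\mathbf x_i)=\frac{1}{4c^2-36(u_i^2+v_i^2)}$, $$\mathfrak M_1+\mathfrak M_2+\mathfrak M_3+\mathfrak M_4=0.$$
   Context: $\mathbf f_c$ is the generic local form of a one-parameter family of maps between planes near an elliptic umbilic singularity; it is induced by the family of functions $F_{c,\mathbf s}(u,v)=s_1u+s_2v+c(u^2+v^2)+u^3-3uv^2$. The points $\mathbf s$ with four preimages form the four-image region bounded by the (three-cusped) caustic of $\mathbf f_c$. *)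

From Stdlib Require Import Reals Lra.
Open Scope R_scope.

Definition fc (c : R) (x : R * R) : R * R :=
  let (u, v) := x in
  (3 * v ^ 2 - 3 * u ^ 2 - 2 * c * u, 6 * u * v - 2 * c * v).

(* Entries of the Jacobian matrix of f_c at (u,v):
   [ d f1/du  d f1/dv ]   [ -6u - 2c     6v     ]
   [ d f2/du  d f2/dv ] = [    6v      6u - 2c  ] *)
Definition jac11 (c u v : R) : R := -6 * u - 2 * c.
Definition jac12 (c u v : R) : R := 6 * v.
Definition jac21 (c u v : R) : R := 6 * v.
Definition jac22 (c u v : R) : R := 6 * u - 2 * c.

Definition jac_det (c : R) (x : R * R) : R :=
  let (u, v) := x in
  jac11 c u v * jac22 c u v - jac12 c u v * jac21 c u v.

From Stdlib Require Import Reals Lra.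
From Coquelicot Require Import Complex.
Open Scope R_scope.

(* Identify a point (u,v) of the plane with the complex number
   z = u + i v (Coquelicot's type C is literally R * R).  Then
   f_c(z) = -3 conj(z)^2 - 2 c z, and eliminating conj(z) between the
   equation f_c(z) = s and its conjugate shows that every solution of
   f_c(z) = s is a root of the complex quartic
       P(z) = 27 z^4 + 18 conj(s) z^2 + 8 c^3 z + 3 conj(s)^2 + 4 c^2 s,
   whose derivative at such a root is the real number 2 c det(Jac f_c)(z).
   The theorem is thus the residue identity sum_i 1/P'(z_i) = 0 for a
   quartic with four distinct roots.  We prove that identity first for an
   arbitrary complex quartic: Newton's divided differences show
   P'(z_1) = a4 (z_1 - z_2)(z_1 - z_3)(z_1 - z_4), and the Lagrange identity
   sum_i 1 / prod_{j<>i} (z_i - z_j) = 0 concludes. *)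

Open Scope C_scope.

(* In a field, a product with a nonzero difference vanishes only if the
   other factor does; this is how roots yield vanishing divided differences. *)
Lemma diff_mult_eq0 (a b q : C) : a <> b -> (a - b) * q = 0 -> q = 0.
Proof.
  intros Hab Hq.
  assert (Hnz : a - b <> 0) by (apply Cminus_eq_contra; exact Hab).
  replace q with (/ (a - b) * ((a - b) * q)) by (field; exact Hnz).
  rewrite Hq; ring.
Qed.

(* Lagrange's identity: the residues of 1 / ((z-a)(z-b)(z-c)(z-d)) sum to 0. *)
Lemma lagrange_residue_sum (a b c d : C) :
  a <> b -> a <> c -> a <> d -> b <> c -> b <> d -> c <> d ->
  / ((a - b) * (a - c) * (a - d)) + / ((b - a) * (b - c) * (b - d))
  + / ((c - a) * (c - b) * (c - d)) + / ((d - a) * (d - b) * (d - c)) = 0.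
Proof.
  intros. field.
  repeat split; apply Cminus_eq_contra; congruence.
Qed.

Section QuarticResidues.

Variables a4 a3 a2 a1 a0 : C.

Definition quartic (z : C) : C := a4 * z ^ 4 + a3 * z ^ 3 + a2 * z ^ 2 + a1 * z + a0.

Definition quartic_deriv (z : C) : C :=
  4%R * a4 * z ^ 3 + 3%R * a3 * z ^ 2 + 2%R * a2 * z + a1.

(* Newton's divided differences of the quartic, of orders one to three. *)
Definition dd1 (a b : C) : C :=
  a4 * (a ^ 3 + a ^ 2 * b + a * b ^ 2 + b ^ 3) + a3 * (a ^ 2 + a * b + b ^ 2)
  + a2 * (a + b) + a1.

Definition dd2 (a b c : C) : C :=
  a4 * (a ^ 2 + b ^ 2 + c ^ 2 + a * b + a * c + b * c) + a3 * (a + b + c) + a2.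

Definition dd3 (a b c d : C) : C := a4 * (a + b + c + d) + a3.

Lemma dd1_spec (a b : C) : quartic a - quartic b = (a - b) * dd1 a b.
Proof. unfold quartic, dd1; ring. Qed.

Lemma dd2_spec (a b c : C) : dd1 a b - dd1 a c = (b - c) * dd2 a b c.
Proof. unfold dd1, dd2; ring. Qed.

Lemma dd3_spec (a b c d : C) : dd2 a b c - dd2 a b d = (c - d) * dd3 a b c d.
Proof. unfold dd2, dd3; ring. Qed.

(* The derivative of Newton's interpolation form at its first node. *)
Lemma quartic_deriv_newton (a b c d : C) :
  quartic_deriv a = dd1 a b + (a - b) * dd2 a b c + (a - b) * (a - c) * dd3 a b c d
                    + a4 * (a - b) * (a - c) * (a - d).
Proof. unfold quartic_deriv, dd1, dd2, dd3; ring. Qed.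

Lemma quartic_deriv_at_root (a b c d : C) :
  quartic a = 0 -> quartic b = 0 -> quartic c = 0 -> quartic d = 0 ->
  a <> b -> a <> c -> a <> d -> b <> c -> b <> d -> c <> d ->
  quartic_deriv a = a4 * (a - b) * (a - c) * (a - d).
Proof.
  intros Ha Hb Hc Hd Hab Hac Had Hbc Hbd Hcd.
  assert (Hdd1 : forall e, quartic e = 0 -> a <> e -> dd1 a e = 0).
  { intros e He Hae; apply (diff_mult_eq0 a e); [exact Hae|].
    rewrite <- dd1_spec, Ha, He; ring. }
  assert (Hab1 := Hdd1 b Hb Hab).
  assert (Hdd2 : forall e, quartic e = 0 -> a <> e -> b <> e -> dd2 a b e = 0).
  { intros e He Hae Hbe; apply (diff_mult_eq0 b e); [exact Hbe|].
    rewrite <- dd2_spec, Hab1, (Hdd1 e He Hae); ring. }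
  assert (Habc2 := Hdd2 c Hc Hac Hbc).
  assert (Habcd3 : dd3 a b c d = 0).
  { apply (diff_mult_eq0 c d); [exact Hcd|].
    rewrite <- dd3_spec, Habc2, (Hdd2 d Hd Had Hbd); ring. }
  rewrite (quartic_deriv_newton a b c d), Hab1, Habc2, Habcd3; ring.
Qed.

Lemma quartic_inv_deriv_sum (a b c d : C) :
  a4 <> 0 ->
  quartic a = 0 -> quartic b = 0 -> quartic c = 0 -> quartic d = 0 ->
  a <> b -> a <> c -> a <> d -> b <> c -> b <> d -> c <> d ->
  / quartic_deriv a + / quartic_deriv b + / quartic_deriv c + / quartic_deriv d = 0.
Proof.
  intros H4 Ha Hb Hc Hd Hab Hac Had Hbc Hbd Hcd.
  rewrite (quartic_deriv_at_root a b c d),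
          (quartic_deriv_at_root b a c d),
          (quartic_deriv_at_root c a b d),
          (quartic_deriv_at_root d a b c); auto.
  rewrite <- (Cmult_0_r (/ a4)), <- (lagrange_residue_sum a b c d); auto.
  field; repeat split; auto; apply Cminus_eq_contra; congruence.
Qed.

End QuarticResidues.

(* The quartic obtained by eliminating conj(z) from f_c(z) = s. *)
Definition elim_quartic (c : R) (s : C) : C -> C :=
  quartic 27%R 0 (18%R * Cconj s) (8%R * (c ^ 3)%R) (3%R * Cconj s ^ 2 + 4%R * (c ^ 2)%R * s).

(* Its derivative (the constant term a0 does not contribute). *)
Definition elim_quartic_deriv (c : R) (s : C) : C -> C :=
  quartic_deriv 27%R 0 (18%R * Cconj s) (8%R * (c ^ 3)%R).

Lemma fc_solution_root (c : R) (s z : C) : fc c z = s -> elim_quartic c s z = 0.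
Proof.
  destruct z as [u v], s as [s1 s2]; unfold fc; intro Hs; injection Hs as H1 H2.
  subst s1 s2; unfold elim_quartic, quartic, Cconj.
  apply injective_projections; simpl; ring.
Qed.

Lemma fc_solution_deriv (c : R) (s z : C) :
  fc c z = s -> elim_quartic_deriv c s z = RtoC (2 * c * jac_det c z).
Proof.
  destruct z as [u v], s as [s1 s2]; unfold fc; intro Hs; injection Hs as H1 H2.
  subst s1 s2; unfold elim_quartic_deriv, quartic_deriv, Cconj, jac_det,
    jac11, jac12, jac21, jac22.
  apply injective_projections; simpl; ring.
Qed.

Close Scope C_scope.

Theorem theorem1 (c : R) (s : R * R) (x1 x2 x3 x4 : R * R) :
  c <> 0 ->
  (* x1..x4 are pairwise distinct *)
  x1 <> x2 -> x1 <> x3 -> x1 <> x4 -> x2 <> x3 -> x2 <> x4 -> x3 <> x4 ->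
  (* they solve f_c(x) = s *)
  fc c x1 = s -> fc c x2 = s -> fc c x3 = s -> fc c x4 = s ->
  (* and they are all the solutions *)
  (forall x : R * R, fc c x = s -> x = x1 \/ x = x2 \/ x = x3 \/ x = x4) ->
  (* nondegenerate Jacobian at each *)
  jac_det c x1 <> 0 -> jac_det c x2 <> 0 -> jac_det c x3 <> 0 -> jac_det c x4 <> 0 ->
  / jac_det c x1 + / jac_det c x2 + / jac_det c x3 + / jac_det c x4 = 0.
Proof.
  intros Hc d12 d13 d14 d23 d24 d34 F1 F2 F3 F4 _ J1 J2 J3 J4.
  assert (H27 : RtoC 27 <> 0) by (intro H; apply RtoC_inj in H; lra).
  assert (Hres := quartic_inv_deriv_sum _ _ _ _ _ x1 x2 x3 x4 H27
    (fc_solution_root c s x1 F1) (fc_solution_root c s x2 F2)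
    (fc_solution_root c s x3 F3) (fc_solution_root c s x4 F4)
    d12 d13 d14 d23 d24 d34).
  fold (elim_quartic_deriv c s) in Hres.
  rewrite (fc_solution_deriv c s x1 F1), (fc_solution_deriv c s x2 F2),
    (fc_solution_deriv c s x3 F3), (fc_solution_deriv c s x4 F4) in Hres.
  rewrite <- !RtoC_inv, <- !RtoC_plus in Hres by (apply Rmult_integral_contrapositive; split; lra).
  apply RtoC_inj in Hres.
  replace (/ jac_det c x1 + / jac_det c x2 + / jac_det c x3 + / jac_det c x4)
    with (2 * c * (/ (2 * c * jac_det c x1) + / (2 * c * jac_det c x2)
                   + / (2 * c * jac_det c x3) + / (2 * c * jac_det c x4)))
    by (field; auto).
  rewrite Hres; ring.
Qed.
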